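(* Let $\alpha=\frac14$, $\zeta=e^{-2\pi i\alpha}=-i$, $\mathcal A_3=\{-2,0,2\}$, and let $L_{-2},L_0,L_2$ be the operators on $\mathbb{C}^{\mathcal A_3}$ defined in the context. Let $\Gamma_3$ be the Zariski closure of the group generated by $L_{-2},L_0,L_2$, let $e$ span the kernel of $Q_{1/4}$, and let $H_{-2}=\mathrm{span}(e_0,e_2)$. Then for every $\mathbb{C}$-linear functional $v$ on $H_{-2}$, the linear map $T_v$ of $\mathbb{C}^{\mathcal A_3}$ defined by $T_v(e)=e$ and $T_v(h)=h+v(h)e$ for $h\in H_{-2}$ belongs to $\Gamma_3$.
   Context: $(e_q)_{q\in\mathcal A_3}$ is the canonical basis. For $p\in\mathcal A_3$, $L_p(e_q)=e_q-e_p$ if $q>p$, $L_p(e_q)=e_q-\zeta e_p$ if $q<p$, $L_p(e_p)=-\zeta e_p$. $Q_{1/4}$ is the hermitian form (linear in the first argument, conjugate-linear in the second) with $Q_{1/4}(e_p,e_p)=1$ and $Q_{1/4}(e_p,e_{p'})=(1+\zeta)^{-1}=\frac12(1+i)$ for $p>p'$; it is degenerate with a one-dimensional kernel spanned by a vector $e$ all of whose coordinates are nonzero, so $\mathbb{C}^{\mathcal A_3}=\mathbb{C}e\oplus H_{-2}$. In the paper's notation, the statement says that the kernel $K=\{v\in (H_{-2})^*: T_v\in\Gamma_3\}$ equals $(H_{-2})^*$. *)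

From HB Require Import structures.
From mathcomp Require Import all_boot all_order all_algebra.
From mathcomp Require Import reals.
From mathcomp Require Import complex.
From mathcomp Require mpoly.
Set Implicit Arguments. Unset Strict Implicit. Unset Printing Implicit Defensive.
Import Order.TTheory GRing.Theory Num.Theory.
Local Open Scope ring_scope.
Local Open Scope complex_scope.

Section Defs.
Variable R : realType.
Notation C := (R[i]).

(* Index set A_3 = {-2, 0, 2} encoded by 'I_3 via 0 |-> -2, 1 |-> 0, 2 |-> 2
   (order preserving). *)

Definition zeta : C := - 'i.

(* Matrix of L_p: column j is the coordinate vector of L_p(e_j).
   L_p e_q = e_q - e_p (q>p), e_q - zeta e_p (q<p), L_p e_p = - zeta e_p. *)
Definition Lop (p : 'I_3) : 'M[C]_3 :=
  \matrix_(r < 3, c < 3) (((r == c) && (c != p))%:R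
                 - (r == p)%:R * (if (p < c)%N then 1 else zeta)).

Inductive in_gen_group : 'M[C]_3 -> Prop :=
| gen_one : in_gen_group 1%:M
| gen_mul : forall p g, in_gen_group g -> in_gen_group (Lop p *m g)
| gen_mulV : forall p g, in_gen_group g -> in_gen_group (invmx (Lop p) *m g).

Definition mx_eval (P : mpoly.mpoly 9 C) (g : 'M[C]_3) : C :=
  mpoly.meval (fun k : 'I_9 => mxvec g 0 k) P.

Definition zariski_closure (S : 'M[C]_3 -> Prop) : 'M[C]_3 -> Prop :=
  fun g => g \in unitmx /\
    forall P : mpoly.mpoly 9 C, (forall s, S s -> mx_eval P s = 0) -> mx_eval P g = 0.

Definition Gamma3 : 'M[C]_3 -> Prop := zariski_closure in_gen_group.

(* Gram matrix of Q_{1/4}: Q(e_p,e_p) = 1, Q(e_p,e_p') = (1+zeta)^-1 for p > p',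
   hence conj((1+zeta)^-1) for p < p' (hermitian). *)
Definition Qgram (p q : 'I_3) : C :=
  if p == q then 1 else if (q < p)%N then (1 + zeta)^-1 else ((1 + zeta)^-1)^*.

Definition Q14 (x y : 'cV[C]_3) : C :=
  \sum_(p < 3) \sum_(q < 3) x p 0 * (y q 0)^* * Qgram p q.

Definition in_kerQ (x : 'cV[C]_3) : Prop := forall y, Q14 x y = 0.

(* H_{-2} = span(e_0, e_2): vectors whose e_{-2}-coordinate (index 0) vanishes. *)
Definition in_Hm2 (h : 'cV[C]_3) : Prop := h ord0 0 = 0.

(* A C-linear functional v on H_{-2} = span(e_0, e_2), given by its values
   a = v(e_0), b = v(e_2): v(h) = a h_0 + b h_2 (coordinates at indices 1, 2). *)
Definition Hm2_functional (a b : C) (h : 'cV[C]_3) : C :=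
  a * h (inord 1) 0 + b * h (inord 2) 0.

End Defs.

(* The kernel of Q_{1/4} is spanned by e = (1, i, -1), and the maps T_v are
   exactly the transvections 1 + e w^T with w^T e = 0; since w^T e = 0 these
   compose by adding the w's.  Two words of length 8 in L_{-2}, L_0, L_2 are such
   transvections, for w1 = (i, -1, 0) and w2 = (1, 0, 1), which span the
   orthogonal of e.  So the group contains the transvections for w = n w1 + m w2
   with n, m natural numbers.  A polynomial in the matrix entries that vanishes on
   these vanishes on the whole plane of transvections: on each line of the plane
   it is a one-variable polynomial with infinitely many roots. *)

From mathcomp Require Import all_boot all_order all_algebra.
From mathcomp Require Import reals complex.
From mathcomp Require mpoly.
From mathcomp Require Import ring.
Set Implicit Arguments. Unset Strict Implicit. Unset Printing Implicit Defensive.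
Import GRing.Theory Num.Theory.
Local Open Scope ring_scope.

Section PolynomialsOnAffinePlanes.
Variables (F : numDomainType) (k : nat).

Lemma poly_nat_roots_eq0 (q : {poly F}) : (forall n : nat, q.[n%:R] = 0) -> q = 0.
Proof.
move=> qn0; apply: (@roots_geq_poly_eq0 _ q [seq n%:R | n <- iota 0 (size q)]).
- by apply/allP => _ /mapP[n _ ->]; rewrite /root qn0.
- by rewrite map_inj_uniq ?iota_uniq // => m n /eqP; rewrite eqr_nat => /eqP.
- by rewrite size_map size_iota.
Qed.

Lemma meval_line_is_poly (P : mpoly.mpoly k F) (u v : 'I_k -> F) :
  exists q : {poly F}, forall x, q.[x] = mpoly.meval (fun i => u i + x * v i) P.
Proof.
exists (\sum_(m <- mpoly.msupp P) (mpoly.mcoeff m P)%:P *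
   \prod_i ((u i)%:P + (v i)%:P * 'X) ^+ mpoly.fun_of_multinom m i).
move=> x; rewrite mpoly.mevalE horner_sum; apply: eq_bigr => m _.
rewrite hornerM hornerC horner_prod; congr (_ * _); apply: eq_bigr => i _.
by rewrite !hornerE (mulrC x).
Qed.

Lemma meval_line_nat (P : mpoly.mpoly k F) (u v : 'I_k -> F) :
  (forall n : nat, mpoly.meval (fun i => u i + n%:R * v i) P = 0) ->
  forall x, mpoly.meval (fun i => u i + x * v i) P = 0.
Proof.
have [q qE] := meval_line_is_poly P u v.
move=> Pn0 x; rewrite -qE (@poly_nat_roots_eq0 q) ?horner0 // => n.
by rewrite qE Pn0.
Qed.

Lemma meval_plane_nat (P : mpoly.mpoly k F) (u v w : 'I_k -> F) :
  (forall n m : nat, mpoly.meval (fun i => u i + n%:R * v i + m%:R * w i) P = 0) ->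
  forall s t, mpoly.meval (fun i => u i + s * v i + t * w i) P = 0.
Proof.
move=> Pnm0 s t.
have Pn0 (n : nat) t' : mpoly.meval (fun i => u i + n%:R * v i + t' * w i) P = 0.
  exact: (meval_line_nat (u := fun i => u i + n%:R * v i)).
rewrite (mpoly.meval_eq (v2 := fun i => (u i + t * w i) + s * v i)) => [|i]; last first.
  by rewrite addrAC.
apply: meval_line_nat => n; rewrite -(Pn0 n t); apply: mpoly.meval_eq => i.
by rewrite addrAC.
Qed.

End PolynomialsOnAffinePlanes.

Lemma addr1_sqrtN1_neq0 (F : numDomainType) (c : F) : c * c = -1 -> 1 + c != 0.
Proof.
move=> cc; have : (1 + c) * (1 - c) = 2 by rewrite mulrDl mul1r mulrBr mulr1 cc; ring.
by apply: contra_eqN => /eqP ->; rewrite mul0r eq_sym pnatr_eq0.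
Qed.

Section Transvections.
Variables (R : comPzRingType) (n : nat).
Implicit Types (e w u : 'cV[R]_n).

Definition transvection e w : 'M[R]_n := 1%:M + e *m w^T.

Lemma transvection0 e : transvection e 0 = 1%:M.
Proof. by rewrite /transvection trmx0 mulmx0 addr0. Qed.

Lemma transvection_mulmx p e w (A : 'M[R]_(n, p)) :
  transvection e w *m A = A + e *m (w^T *m A).
Proof. by rewrite mulmxDl mul1mx mulmxA. Qed.

Lemma transvectionD e w u : w^T *m e = 0 ->
  transvection e w *m transvection e u = transvection e (w + u).
Proof.
move=> we0; rewrite [LHS]transvection_mulmx {2}/transvection mulmxDr mulmx1.
rewrite [w^T *m _]mulmxA we0 mul0mx addr0.
by rewrite /transvection linearD /= mulmxDr addrA addrAC.
Qed.

Lemma transvectionZl (c : R) e w : transvection (c *: e) w = transvection e (c *: w).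
Proof. by rewrite /transvection linearZ /= -scalemxAl scalemxAr. Qed.

Lemma transvection_affine e w u (s : R) :
  transvection e (w + s *: u) = transvection e w + s *: (e *m u^T).
Proof. by rewrite /transvection linearD linearZ /= mulmxDr scalemxAr addrA. Qed.

End Transvections.

Lemma transvection_unit (R : comUnitRingType) n (e w : 'cV[R]_n) :
  w^T *m e = 0 -> transvection e w \in unitmx.
Proof.
by move=> we0; have [] := mulmx1_unit (etrans (transvectionD (-w) we0) _);
  rewrite ?subrr ?transvection0.
Qed.

Lemma col_matrixP (R : Type) m n (A B : 'M[R]_(m, n)) :
  (forall j, col j A = col j B) <-> A = B.
Proof.
split=> [AB|-> //]; apply: trmx_inj; apply/row_matrixP => j.
by rewrite -!tr_col AB.
Qed.

Lemma mulmx_eq_hyperplane (F : fieldType) m n (A B : 'M[F]_(m, n.+1))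
    (e : 'cV_n.+1) :
  e ord0 0 != 0 -> A *m e = B *m e ->
  (forall h : 'cV_n.+1, h ord0 0 = 0 -> A *m h = B *m h) -> A = B.
Proof.
move=> e0 ABe ABh; apply/col_matrixP => j; rewrite !colE.
move: (delta_mx j 0) => v; pose c := v ord0 0 / e ord0 0.
have hv : (v - c *: e) ord0 0 = 0 by rewrite !mxE /c divfK // subrr.
rewrite -(subrK (c *: e) v); move: (v - c *: e) hv => h hv.
by rewrite !mulmxDr -!scalemxAr ABe ABh.
Qed.

Section Gamma3.
Variable R : realType.
Notation C := R[i].

Lemma mulii : ('i : C) * 'i = -1. Proof. by rewrite -expr2 sqrCi. Qed.

Definition col3 (x y z : C) : 'cV[C]_3 := \col_i [:: x; y; z]`_i.

Ltac col3_entrywise :=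
  apply/matrixP => -[[|[|[|//]]] ?] [[|//] ?]; rewrite !(mxE, big_ord_recr, big_ord0) /=.

Lemma col3E (v : 'cV[C]_3) : v = col3 (v ord0 0) (v 1 0) (v 2 0).
Proof.
by apply/matrixP => -[[|[|[|//]]] ?] [[|//] ?];
  rewrite !mxE; congr (v _ _); apply: val_inj.
Qed.

Lemma Lop0_col3 x y z : Lop R 0 *m col3 x y z = col3 (- (zeta R * x + y + z)) y z.
Proof. by col3_entrywise; ring. Qed.

Lemma Lop1_col3 x y z :
  Lop R 1 *m col3 x y z = col3 x (- (zeta R * x + zeta R * y + z)) z.
Proof. by col3_entrywise; ring. Qed.

Lemma Lop2_col3 x y z :
  Lop R 2 *m col3 x y z = col3 x y (- (zeta R * x + zeta R * y + zeta R * z)).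
Proof. by col3_entrywise; ring. Qed.

Definition e_ker : 'cV[C]_3 := col3 1 'i (-1).
Definition w1 : 'cV[C]_3 := col3 'i (-1) 0.
Definition w2 : 'cV[C]_3 := col3 1 0 1.

Lemma delta_col3 (j : 'I_3) :
  delta_mx j 0 = col3 (j == 0 :> nat)%:R (j == 1 :> nat)%:R (j == 2 :> nat)%:R.
Proof.
by apply/matrixP => -[[|[|[|//]]] ?] [[|//] ?];
  rewrite !mxE /= andbT; case: j => -[|[|[|//]]].
Qed.

(* Found by breadth-first search: 8 is the least length of a product of the
   L_p that is a nontrivial transvection. *)
Lemma Lop_word_w1 :
  Lop R 0 *m Lop R 1 *m Lop R 1 *m Lop R 1 *m Lop R 0 *m Lop R 2 *m Lop R 0 *m Lop R 0
  = transvection e_ker w1.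
Proof.
apply/col_matrixP => j; rewrite !colE -!mulmxA transvection_mulmx delta_col3.
rewrite !(Lop0_col3, Lop1_col3, Lop2_col3) /zeta.
by case: j => -[|[|[|//]]] ?; col3_entrywise; ring: mulii.
Qed.

Lemma Lop_word_w2 :
  Lop R 0 *m Lop R 0 *m Lop R 1 *m Lop R 1 *m Lop R 1 *m Lop R 0 *m Lop R 2 *m Lop R 0
  = transvection e_ker w2.
Proof.
apply/col_matrixP => j; rewrite !colE -!mulmxA transvection_mulmx delta_col3.
rewrite !(Lop0_col3, Lop1_col3, Lop2_col3) /zeta.
by case: j => -[|[|[|//]]] ?; col3_entrywise; ring: mulii.
Qed.

Lemma in_gen_group_mul (g h : 'M[C]_3) :
  in_gen_group g -> in_gen_group h -> in_gen_group (g *m h).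
Proof.
elim=> [|p {}g _ IHg|p {}g _ IHg] hh; first by rewrite mul1mx.
- by rewrite -mulmxA; apply: gen_mul; apply: IHg.
- by rewrite -mulmxA; apply: gen_mulV; apply: IHg.
Qed.

Lemma in_gen_group_Lop p : in_gen_group (Lop R p).
Proof. by rewrite -[Lop R p]mulmx1; apply: gen_mul; apply: gen_one. Qed.

Lemma in_gen_group_w1 : in_gen_group (transvection e_ker w1).
Proof. by rewrite -Lop_word_w1; repeat apply: in_gen_group_mul; apply: in_gen_group_Lop. Qed.

Lemma in_gen_group_w2 : in_gen_group (transvection e_ker w2).
Proof. by rewrite -Lop_word_w2; repeat apply: in_gen_group_mul; apply: in_gen_group_Lop. Qed.

Lemma w_orth_e_ker s t : (s *: w1 + t *: w2)^T *m e_ker = 0.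
Proof.
apply/matrixP => -[[|//] ?] [[|//] ?].
by rewrite !(mxE, big_ord_recr, big_ord0) /=; ring: mulii.
Qed.

Lemma in_gen_group_transvection_nat (n m : nat) :
  in_gen_group (transvection e_ker (n%:R *: w1 + m%:R *: w2)).
Proof.
have w1_orth : w1^T *m e_ker = 0 by rewrite -(w_orth_e_ker 1 0) scale1r scale0r addr0.
have w2_orth : w2^T *m e_ker = 0 by rewrite -(w_orth_e_ker 0 1) scale1r scale0r add0r.
have stepP w u : w^T *m e_ker = 0 -> in_gen_group (transvection e_ker w) ->
    in_gen_group (transvection e_ker u) -> in_gen_group (transvection e_ker (w + u)).
  by move=> we0 gw gu; rewrite -transvectionD //; apply: in_gen_group_mul.
elim: n => [|n IHn].
  elim: m => [|m IHm]; first by rewrite !scale0r addr0 transvection0; apply: gen_one.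
  by rewrite mulrS scalerDl scale1r addrCA; apply: stepP => //; apply: in_gen_group_w2.
by rewrite mulrS scalerDl scale1r -addrA; apply: stepP => //; apply: in_gen_group_w1.
Qed.

Lemma Gamma3_transvection s t : Gamma3 (transvection e_ker (s *: w1 + t *: w2)).
Proof.
split; first exact/transvection_unit/w_orth_e_ker.
move=> P P0.
have mxvecE s' t' : mxvec (transvection e_ker (s' *: w1 + t' *: w2)) 0 =1
    (fun k => mxvec 1%:M 0 k + s' * mxvec (e_ker *m w1^T) 0 k
              + t' * mxvec (e_ker *m w2^T) 0 k).
  move=> k; rewrite -[s' *: w1]add0r !transvection_affine transvection0.
  by rewrite !linearD !linearZ /= !mxE.
rewrite /mx_eval (mpoly.meval_eq _ (mxvecE s t)); apply: meval_plane_nat => n m.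
rewrite -(mpoly.meval_eq _ (mxvecE _ _)); apply: P0.
exact: in_gen_group_transvection_nat.
Qed.

Lemma conjc_1Pzeta : conjc (1 + zeta R) = 1 + 'i.
Proof.
rewrite /zeta -complexiE; apply/eqP; rewrite eq_complex /=.
by apply/andP; split; apply/eqP; ring.
Qed.

Lemma inv_1Pzeta : (1 + zeta R)^-1 = (1 + 'i) / 2.
Proof. by rewrite /zeta; field: mulii; apply: addr1_sqrtN1_neq0; ring: mulii. Qed.

Lemma conjc_inv_1Pzeta : conjc (1 + zeta R)^-1 = (1 - 'i) / 2.
Proof.
rewrite conjc_inv conjc_1Pzeta.
by field: mulii; apply: addr1_sqrtN1_neq0; ring: mulii.
Qed.

Lemma kerQ_col3 (x y z : C) : in_kerQ (col3 x y z) -> y = 'i * x /\ z = - x.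
Proof.
move=> K.
have := K (col3 1 0 0); have := K (col3 0 1 0).
rewrite /Q14 !(big_ord_recr, big_ord0, mxE) /Qgram conjc_inv_1Pzeta inv_1Pzeta /= !rmorph0 !rmorph1.
move=> E1 E0; split; apply/eqP; rewrite -subr_eq0; apply/eqP.
- move: (f_equal2 (fun u v => (-1 - 'i) * u + (1 + 'i) * v) E0 E1) => /=.
  by rewrite !mulr0 addr0 => <-; field: mulii.
- move: (f_equal2 (fun u v => 2 * u + (-1 - 'i) * v) E0 E1) => /=.
  by rewrite !mulr0 addr0 => <-; field: mulii.
Qed.

Lemma kerQ_e_ker (e : 'cV[C]_3) : in_kerQ e -> e = e ord0 0 *: e_ker.
Proof.
rewrite {1}(col3E e) => /kerQ_col3[e1 e2].
by rewrite [LHS]col3E e1 e2; col3_entrywise; ring.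
Qed.

Lemma orth_e_ker_span (w : 'cV[C]_3) :
  w^T *m e_ker = 0 -> w = (- w 1 0) *: w1 + w 2 0 *: w2.
Proof.
rewrite (col3E w); move: (w ord0 0) (w 1 0) (w 2 0) => x y z.
move/matrixP/(_ 0 0); rewrite !(mxE, big_ord_recr, big_ord0) /= => we0.
col3_entrywise; try ring.
by apply/eqP; rewrite -subr_eq0 -we0; apply/eqP; ring.
Qed.

Lemma Gamma3_transvection_kerQ (e w : 'cV[C]_3) :
  in_kerQ e -> w^T *m e = 0 -> Gamma3 (transvection e w).
Proof.
move=> /kerQ_e_ker eE we0; rewrite eE transvectionZl.
rewrite (orth_e_ker_span (w := e ord0 0 *: w)); first exact: Gamma3_transvection.
by rewrite linearZ /= -scalemxAl scalemxAr -eE.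
Qed.

Lemma Hm2_functional_col3 (a b x y z : C) :
  Hm2_functional a b (col3 x y z) = a * y + b * z.
Proof. by rewrite /Hm2_functional !mxE !inordK. Qed.

End Gamma3.

Unset Implicit Arguments.
Theorem mainTheorem16 (R : realType) (e : 'cV[R[i]]_3) (a b : R[i]) (T : 'M[R[i]]_3) :
  e != 0 -> in_kerQ e ->
  T *m e = e ->
  (forall h : 'cV[R[i]]_3, in_Hm2 h -> T *m h = h + Hm2_functional a b h *: e) ->
  Gamma3 T.
Proof.
move=> e_neq0 eK Te Th; have eE := kerQ_e_ker eK.
pose w := col3 (b - 'i * a) a b.
have we0 : w^T *m e = 0.
  by rewrite eE -scalemxAr; apply/matrixP=> -[[|//] ?] [[|//] ?];
    rewrite !(mxE, big_ord_recr, big_ord0) /=; ring: (@mulii R).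
suff -> : T = transvection e w by apply: Gamma3_transvection_kerQ.
apply: (mulmx_eq_hyperplane (e := e)).
- by apply: contraNneq e_neq0 => e00; rewrite eE e00 scale0r.
- by rewrite Te transvection_mulmx we0 mulmx0 addr0.
move=> h h0; rewrite Th // transvection_mulmx [_^T *m _]mx11_scalar mul_mx_scalar.
congr (_ + _ *: _); rewrite /w (col3E h) h0 Hm2_functional_col3.
by rewrite !(mxE, big_ord_recr, big_ord0) /=; ring.
Qed.
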